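(* Let $E_1,\dots,E_m$ be events on a probability space, let $1\le k\le m$, and fix real numbers $0<a<b$. Define $X_i=b$ on $E_i$ and $X_i=a$ on $E_i^c$, and for $\mathcal S\subseteq[m]$ with $|\mathcal S|=k$ define $$U(\mathcal S)=\mathbf P\Big(\bigcup_{i\in\mathcal S}E_i\Big),\qquad V(\mathcal S)=\mathbf E\Big[\ln\Big(\frac1k\sum_{i\in\mathcal S}X_i\Big)\Big].$$ Let $\mathcal S_L$ maximize $V$ and $\mathcal S_W$ maximize $U$ over all $k$-element subsets of $[m]$. Suppose there exist $\lambda\in[0,1]$ and $p\in(0,1/k]$ such that for every $k$-element $\mathcal S\subseteq[m]$, every $l\in[k]$, and every $T\subseteq\mathcal S$ with $|T|=l$, $$(1-\lambda)p^l(1-p)^{k-l}\le \mathbf P\Big(\Big(\bigcap_{i\in T}E_i\Big)\cap\Big(\bigcap_{j\in\mathcal S\setminus T}E_j^c\Big)\Big)\le(1+\lambda)p^l(1-p)^{k-l}.$$ Then $$\frac{U(\mathcal S_W)-U(\mathcal S_L)}{U(\mathcal S_W)}\le\frac{2\zeta(3)\lambda kp(1-p)}{\ln\!\big(1+\frac{b-a}{ka}\big)(1-\lambda)\big(1-(1-p)^k\big)},$$ where $\zeta(3)=\sum_{n=1}^\infty n^{-3}$.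
   Context: $[m]=\{1,\dots,m\}$. $\mathcal S_W$ is an optimal ''picking winners'' portfolio and $\mathcal S_L$ a log-optimal portfolio. *)

From HB Require Import structures.
From mathcomp Require Import all_boot all_order all_algebra.
From mathcomp Require Import all_classical all_reals all_analysis.
Set Implicit Arguments. Unset Strict Implicit. Unset Printing Implicit Defensive.
Import Order.TTheory GRing.Theory Num.Theory.
Local Open Scope classical_set_scope.
Local Open Scope ring_scope.

Definition Xv {T : Type} {R : realType} {m : nat} (E : 'I_m -> set T) (a b : R)
  (i : 'I_m) : T -> R := fun x => if `[< E i x >] then b else a.

Definition Ufun d (T : measurableType d) (R : realType) (P : probability T R)
  (m : nat) (E : 'I_m -> set T) (S : {set 'I_m}) : \bar R :=
  P (\big[setU/set0]_(i in S) E i).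

Definition Vfun d (T : measurableType d) (R : realType) (P : probability T R)
  (m k : nat) (E : 'I_m -> set T) (a b : R) (S : {set 'I_m}) : \bar R :=
  ('E_P[fun x => ln ((k%:R)^-1 * \sum_(i in S) Xv E a b i x)])%E.

Definition atom (T : Type) (m : nat) (E : 'I_m -> set T) (S A : {set 'I_m}) : set T :=
  (\big[setI/setT]_(i in A) E i) `&` (\big[setI/setT]_(j in S :\: A) ~` E j).

Definition zeta3 (R : realType) : R :=
  limn (fun N => \sum_(1 <= n < N) ((n%:R : R) ^+ 3)^-1).

From HB Require Import structures.
From mathcomp Require Import all_boot all_order all_algebra.
From mathcomp Require Import all_classical all_reals all_analysis.
From mathcomp Require Import ring lra.
Import Order.TTheory GRing.Theory Num.Theory.
Local Open Scope classical_set_scope.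
Local Open Scope ring_scope.

(* Split the sample space into the atoms of S, indexed by the set A of events of S
   that occur.  With c = (b - a)/(k a), on the atom of A the payoff is
   ln ((1/k) sum X_i) = ln a + ln (1 + c) [A nonempty] + g |A|, where g 0 = 0 and
   g l = ln ((1 + l c)/(1 + c)) lies in [0, l - 1] for l >= 1 ([ln_excess]).  Hence
   V(S) = ln a + ln (1 + c) U(S) + G(S), and the hypothesis on the atoms puts G(S)
   within a factor 1 +- lambda of its value Q for independent events of probability
   p, and U(S) above (1 - lambda)(1 - (1 - p)^k).  Optimality of S_L gives
   ln (1 + c) (U(S_W) - U(S_L)) <= G(S_L) - G(S_W) <= 2 lambda Q, and
   Q <= E[(Bin(k, p) - 1)^+] <= k p (1 - p) / 2 by the second-order Bonferroni
   inequality; zeta(3) >= 1 absorbs the constant. *)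

Lemma inv_cube_le_telescope (R : realFieldType) (n : nat) : (0 < n)%N ->
  ((n%:R : R) ^+ 3)^-1 <= 2 * ((n%:R)^-1 - (n.+1%:R)^-1).
Proof.
rewrite -[n.+1%:R]natr1 -(ler1n R); set x : R := n%:R => x1.
have x0 : 0 < x by lra.
have -> : 2 * (x^-1 - (x + 1)^-1) = (x * (x + 1) / 2)^-1.
  by field; apply/andP; split; apply: lt0r_neq0; lra.
rewrite lef_pV2 ?posrE ?exprn_gt0 ?divr_gt0 ?mulr_gt0 //; try lra.
rewrite ler_pdivrMr // !exprS expr0 mulr1; nra.
Qed.

Lemma zeta3_partial_le2 (R : realFieldType) (N : nat) :
  \sum_(1 <= n < N) ((n%:R : R) ^+ 3)^-1 <= 2.
Proof.
have [N0|N1] := leqP N 1; first by rewrite big_geq.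
have tele : \sum_(1 <= n < N) ((n%:R : R)^-1 - (n.+1%:R)^-1) = 1 - (N%:R)^-1.
  rewrite (@telescope_sumr_eq _ 1 N (fun n => - (n%:R : R)^-1)).
  - by rewrite invr1 opprK addrC.
  - exact: ltnW.
  - by move=> n _; rewrite opprK addrC.
apply: le_trans (_ : 2 * (1 - (N%:R)^-1) <= 2).
  rewrite -tele mulr_sumr; apply: ler_sum_nat => n /andP[n1 _].
  exact: inv_cube_le_telescope.
have N0 : (0 : R) <= (N%:R)^-1 by rewrite invr_ge0 ler0n.
rewrite ler_piMr ?ler0n //; lra.
Qed.

Lemma zeta3_ge1 (R : realType) : 1 <= zeta3 R.
Proof.
set u := fun N => \sum_(1 <= n < N) ((n%:R : R) ^+ 3)^-1.
have u_nd : nondecreasing_seq u.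
  apply/nondecreasing_seqP => N; rewrite /u.
  case: N => [|N]; first by rewrite !big_geq.
  by rewrite [leRHS]big_nat_recr //= lerDl invr_ge0 exprn_ge0 ?ler0n.
have u_cvg : cvgn u.
  apply: nondecreasing_is_cvgn => //; exists 2 => _ [N _ <-].
  exact: zeta3_partial_le2.
by have := nondecreasing_cvgn_le u_nd u_cvg 2; rewrite /u big_nat1 expr1n invr1.
Qed.

Section binomial_pmf_moments.
Context {R : realType} (p : R).

Lemma binomial_pmf_sum1 k : \sum_(l < k.+1) binomial_pmf k p l = 1.
Proof.
rewrite -(expr1n R k) -{1}(subrK p 1) exprDn.
by apply: eq_bigr => l _; rewrite /binomial_pmf mulrC.
Qed.

Lemma binomial_pmf_sum_eq0 k :
  \sum_(l < k.+1) binomial_pmf k p l * (l == 0 :> nat)%:R = (1 - p) ^+ k.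
Proof.
rewrite big_ord_recl big1 ?addr0 => [|l _]; last by rewrite mulr0.
by rewrite /binomial_pmf expr0 mul1r subn0 bin0 mulr1n mulr1.
Qed.

Lemma binomial_pmf_sum_neq0 k :
  \sum_(l < k.+1) binomial_pmf k p l * (l != 0 :> nat)%:R = 1 - (1 - p) ^+ k.
Proof.
have neq0E (l : nat) : ((l != 0)%:R : R) = 1 - (l == 0)%:R.
  by case: l => [|l] /=; rewrite ?subrr ?subr0.
under eq_bigr do rewrite neq0E mulrBr mulr1.
by rewrite sumrB binomial_pmf_sum1 binomial_pmf_sum_eq0.
Qed.

Lemma binomial_pmf_mean k : \sum_(l < k.+1) binomial_pmf k p l * l%:R = k%:R * p.
Proof.
case: k => [|n]; first by rewrite big_ord1 mulr0 mul0r.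
rewrite big_ord_recl mulr0 add0r.
transitivity (\sum_(j < n.+1) n.+1%:R * p * binomial_pmf n p j).
  apply: eq_bigr => j _; rewrite lift0 /binomial_pmf subSS.
  rewrite -[_ *+ 'C(n.+1, _)]mulr_natr -[_ *+ 'C(n, _)]mulr_natr.
  have binE : (j.+1 * 'C(n.+1, j.+1) = n.+1 * 'C(n, j))%N by rewrite -mul_bin_diag.
  rewrite -mulrA -natrM mulnC binE natrM exprS; ring.
by rewrite -mulr_sumr binomial_pmf_sum1 mulr1.
Qed.

Lemma expr1B_le_quadratic k : 0 <= p <= 1 ->
  (1 - p) ^+ k <= 1 - k%:R * p + k%:R * (k%:R - 1) / 2 * p ^+ 2.
Proof.
move=> /andP[p0 p1]; elim: k => [|k IH]; first by rewrite expr0 !mul0r subr0 addr0.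
rewrite exprS -natr1.
have k0 : (0 : R) <= k%:R by rewrite ler0n.
have kk1 : 0 <= (k%:R : R) * (k%:R - 1) / 2 * p ^+ 3.
  case: k {IH k0} => [|k]; first by rewrite !mul0r.
  rewrite -natr1 addrK; apply: mulr_ge0; last exact: exprn_ge0.
  by apply: mulr_ge0; [apply: mulr_ge0; rewrite ?addr_ge0 ?ler0n | lra].
apply: le_trans (ler_wpM2l _ IH) _; first lra.
have -> : (1 - p) * (1 - k%:R * p + k%:R * (k%:R - 1) / 2 * p ^+ 2) =
  1 - (k%:R + 1) * p + (k%:R + 1) * (k%:R + 1 - 1) / 2 * p ^+ 2
  - k%:R * (k%:R - 1) / 2 * p ^+ 3 by field.
lra.
Qed.

Lemma binomial_pmf_predn_mean k :
  \sum_(l < k.+1) binomial_pmf k p l * (l.-1)%:R = k%:R * p - 1 + (1 - p) ^+ k.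
Proof.
have prednE (l : nat) : (l.-1%:R : R) = l%:R - 1 + (l == 0)%:R.
  case: l => [|l] /=; first by rewrite subrK.
  by rewrite -[l.+1%:R]natr1 addrK addr0.
under eq_bigr do rewrite prednE !mulrDr mulrN1.
by rewrite !big_split /= binomial_pmf_mean sumrN binomial_pmf_sum1 binomial_pmf_sum_eq0.
Qed.

Lemma binomial_pmf_predn_mean_le k : 0 <= p <= 1 -> k%:R * p <= 1 ->
  \sum_(l < k.+1) binomial_pmf k p l * (l.-1)%:R <= k%:R * p * (1 - p) / 2.
Proof.
move=> p01 kp1; rewrite binomial_pmf_predn_mean.
have := expr1B_le_quadratic k p01; case/andP: p01 => p0 p1.
have kp0 : 0 <= (k%:R : R) * p by rewrite mulr_ge0 ?ler0n.
have -> : (k%:R : R) * (k%:R - 1) / 2 * p ^+ 2 = (k%:R * p) * (k%:R * p - p) / 2.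
  by rewrite expr2; field.
nra.
Qed.

End binomial_pmf_moments.

Lemma sum_subsets_by_card (V : nmodType) (I : finType) (S : {set I}) (h : nat -> V) :
  \sum_(A : {set I} | A \subset S) h #|A| = \sum_(l < #|S|.+1) h l *+ 'C(#|S|, l).
Proof.
rewrite (partition_big (fun A : {set I} => inord #|A| : 'I_#|S|.+1) xpredT) //=.
apply: eq_bigr => l _; rewrite -cards_draws -sumr_const.
have inordK_card (A : {set I}) : A \subset S -> (inord #|A| : 'I_#|S|.+1) = #|A| :> nat.
  by move=> AS; rewrite inordK // ltnS subset_leq_card.
apply: eq_big => A; rewrite ?inE.
  apply/andP/andP => -[AS /eqP Al]; split=> //; apply/eqP.
    by rewrite -Al inordK_card.
  by apply: val_inj; rewrite /= inordK_card.
by case/andP=> AS /eqP <-; rewrite inordK_card.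
Qed.

Lemma bigsetI_finP (I : finType) (U : Type) (A : {pred I}) (F : I -> set U) (x : U) :
  (\big[setI/setT]_(i in A) F i) x <-> (forall i, i \in A -> F i x).
Proof.
rewrite -[X in X x]setCK setC_bigsetI -bigcup_pred /=; split.
  by move=> H i iA; apply: contrapT => nF; apply: H; exists i.
by move=> H [i iA]; apply; exact: H.
Qed.

Definition ln_excess {R : realType} (c : R) (l : nat) : R :=
  ln (1 + l%:R * c) - ln (1 + c) * (l != 0)%:R.

Section ln_excess.
Context {R : realType} (c : R).

Lemma ln_excess0 : ln_excess c 0 = 0.
Proof. by rewrite /ln_excess mul0r addr0 ln1 mulr0 subrr. Qed.

Lemma ln_excessS n : 0 <= c -> ln_excess c n.+1 = ln (1 + n%:R * (c / (1 + c))).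
Proof.
move=> c_ge0.
have c1 : 0 < 1 + c by lra.
have nc1 : 0 < 1 + n.+1%:R * c by rewrite ltr_pwDl ?mulr_ge0 ?ler0n.
rewrite /ln_excess mulr1 -ln_div ?posrE //; congr (ln _).
by rewrite -[n.+1%:R]natr1; field; rewrite lt0r_neq0.
Qed.

Lemma ln_excess_ge0 l : 0 <= c -> 0 <= ln_excess c l.
Proof.
case: l => [|n] c_ge0; first by rewrite ln_excess0.
rewrite ln_excessS //; apply: ln_ge0.
by rewrite lerDl mulr_ge0 ?ler0n ?divr_ge0 //; lra.
Qed.

Lemma ln_excess_le_predn l : 0 <= c -> ln_excess c l <= l.-1%:R.
Proof.
case: l => [|n] c_ge0; first by rewrite ln_excess0.
have c1 : 0 <= c / (1 + c) <= 1 by rewrite divr_ge0 ?ler_pdivrMr /=; lra.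
have ncc : 0 <= n%:R * (c / (1 + c)) by rewrite mulr_ge0 ?ler0n //; case/andP: c1.
rewrite ln_excessS //; apply: le_trans (le_ln1Dx _) _; first lra.
by rewrite ler_piMr ?ler0n //; case/andP: c1.
Qed.

Lemma binomial_pmf_ln_excess_le (k : nat) (p : R) : 0 <= c -> 0 <= p <= 1 ->
  k%:R * p <= 1 ->
  \sum_(l < k.+1) binomial_pmf k p l * ln_excess c l <= k%:R * p * (1 - p) / 2.
Proof.
move=> c0 p01 kp1; apply: le_trans (binomial_pmf_predn_mean_le _ _ p01 kp1).
by apply: ler_sum => l _; rewrite ler_wpM2l ?binomial_pmf_ge0 ?ln_excess_le_predn.
Qed.

End ln_excess.

Lemma ln_mean_payoffE (R : realType) (k l : nat) (a b : R) :
  (0 < k)%N -> 0 < a -> a <= b ->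
  ln (k%:R^-1 * (k%:R * a + l%:R * (b - a))) =
  ln a + ln (1 + (b - a) / (k%:R * a)) * (l != 0)%:R + ln_excess ((b - a) / (k%:R * a)) l.
Proof.
rewrite -(ltr0n R) => k0 a0 ab; set c := (b - a) / (k%:R * a).
have c0 : 0 <= c by apply: divr_ge0; [lra | apply: mulr_ge0; lra].
have lc0 : 0 < 1 + l%:R * c.
  have : 0 <= l%:R * c by rewrite mulr_ge0 ?ler0n.
  lra.
rewrite /ln_excess addrAC -addrA subrK -lnM ?posrE //; congr (ln _).
by rewrite /c; field; rewrite !lt0r_neq0.
Qed.

Lemma relative_gap_le (R : realFieldType) (x y L N r : R) :
  0 < L -> 0 < r -> r <= x -> 0 <= N -> L * (x - y) <= N ->
  (x - y) / x <= N / (L * r).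
Proof.
move=> L0 r0 rx N0 gap; have x0 : 0 < x by exact: lt_le_trans rx.
rewrite ler_pdivrMr // -(ler_pM2l L0); apply: le_trans gap _.
have -> : L * (N / (L * r) * x) = N * (x / r) by field; rewrite !lt0r_neq0.
by rewrite ler_peMr // ler_pdivlMr // mul1r.
Qed.

Section atoms.
Context {d : measure_display} {T : measurableType d} {R : realType} (P : probability T R).
Context {m : nat} (E : 'I_m -> set T).
Hypothesis mE : forall i, measurable (E i).
Implicit Types (S A : {set 'I_m}) (x : T).

Definition occurring (S : {set 'I_m}) (x : T) : {set 'I_m} := [set i in S | `[< E i x >]].

Lemma occurring_sub S x : occurring S x \subset S.
Proof. by apply/fintype.subsetP => i; rewrite inE => /andP[]. Qed.

Lemma atom_occurringP S A x : A \subset S -> atom E S A x <-> A = occurring S x.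
Proof.
move=> AS; rewrite /atom; split.
  move=> [/bigsetI_finP EA /bigsetI_finP EnA]; apply/setP => i; rewrite !inE.
  have [iA|iA] := boolP (i \in A).
    by rewrite (fintype.subsetP AS _ iA); apply/esym/asboolP; exact: EA.
  have [iS|//] := boolP (i \in S); apply/esym/asboolP; apply: EnA.
  by rewrite !inE iA iS.
move=> ->; split; apply/bigsetI_finP => i; rewrite !inE.
  by case/andP=> _ /asboolP.
by case/andP=> + iS Ei => /negP; apply; rewrite iS; apply/asboolP.
Qed.

Lemma measurable_atom S A : measurable (atom E S A).
Proof.
by apply: measurableI; apply: bigsetI_measurable => i _ //; exact: measurableC.
Qed.

Lemma expectation_atoms (S : {set 'I_m}) (h : nat -> R) (f : T -> R) :
  (forall x, f x = h #|occurring S x|) ->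
  ('E_P[f] = (\sum_(A : {set 'I_m} | A \subset S) h #|A| * fine (P (atom E S A)))%:E)%E.
Proof.
move=> fE; rewrite unlock.
transitivity (\int[P]_x (\sum_(A : {set 'I_m} | A \subset S)
                 ((h #|A|)%:E * (\1_(atom E S A) x)%:E)))%E.
  apply: eq_integral => x _; rewrite fE sumEFin; congr (_%:E).
  rewrite (bigD1 (occurring S x)) ?occurring_sub //= big1 ?addr0.
    rewrite indicE mem_set ?mulr1 //.
    by apply/atom_occurringP => //; exact: occurring_sub.
  move=> A /andP[AS AnS]; rewrite indicE memNset ?mulr0 //.
  by move/(atom_occurringP _ _ _ AS) => AE; rewrite AE eqxx in AnS.
have iatom A : P.-integrable setT (fun x => (\1_(atom E S A) x)%:E).
  exact/integrable_indic/measurable_atom.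
rewrite integral_sum //; last by move=> A; apply: integrableZl.
rewrite -sumEFin; apply: eq_bigr => A _.
rewrite integralZl // integral_indic ?setIT //; last exact: measurable_atom.
by rewrite EFinM fineK // fin_num_measure //; exact: measurable_atom.
Qed.

Lemma sum_atoms (S : {set 'I_m}) :
  \sum_(A : {set 'I_m} | A \subset S) fine (P (atom E S A)) = 1.
Proof.
have := @expectation_atoms S (fun _ => 1) (cst 1) (fun _ => erefl).
rewrite expectation_cst => -[->].
by apply: eq_bigr => A _; rewrite mul1r.
Qed.

Lemma Ufun_atoms S : fine (Ufun P E S) =
  \sum_(A : {set 'I_m} | A \subset S) (#|A| != 0)%:R * fine (P (atom E S A)).
Proof.
rewrite /Ufun -expectation_indic; last exact: bigsetU_measurable.
rewrite (@expectation_atoms S (fun l => (l != 0)%:R)) // => x.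
rewrite indicE -bigcup_pred cards_eq0; congr (nat_of_bool _)%:R.
apply/idP/finset.set0Pn => [/set_mem [i iS Ei] | [i]].
  by exists i; rewrite inE iS; apply/asboolP.
rewrite [i \in _]inE => /andP[iS /asboolP Ei]; apply/mem_set; by exists i.
Qed.

Lemma Vfun_atoms (k : nat) (a b : R) S : #|S| = k ->
  Vfun P k E a b S = (\sum_(A : {set 'I_m} | A \subset S)
     ln (k%:R^-1 * (k%:R * a + #|A|%:R * (b - a))) * fine (P (atom E S A)))%:E.
Proof.
move=> Sk; apply: (@expectation_atoms S (fun l => ln (k%:R^-1 * (k%:R * a + l%:R * (b - a))))) => x.
congr (ln (_ * _)).
transitivity (\sum_(i in S) (a + (`[< E i x >])%:R * (b - a))).
  by apply: eq_bigr => i _; rewrite /Xv; case: `[< E i x >]; rewrite ?mul1r ?mul0r ?addr0 // addrC subrK.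
rewrite big_split /= sumr_const Sk mulr_natl -big_distrl /=; congr (_ + _ * _).
rewrite -sum1_card natr_sum [LHS]big_mkcond [RHS]big_mkcond.
by apply: eq_bigr => i _; rewrite inE; case: (i \in S); case: `[< E i x >].
Qed.

Lemma Vfun_decomp (k : nat) (a b : R) S : (0 < k)%N -> 0 < a -> a <= b -> #|S| = k ->
  Vfun P k E a b S = (ln a + ln (1 + (b - a) / (k%:R * a)) * fine (Ufun P E S) +
    \sum_(A : {set 'I_m} | A \subset S)
      ln_excess ((b - a) / (k%:R * a)) #|A| * fine (P (atom E S A)))%:E.
Proof.
move=> k0 a0 ab Sk; rewrite Vfun_atoms // Ufun_atoms; congr (_%:E).
transitivity (\sum_(A : {set 'I_m} | A \subset S)
  (ln a * fine (P (atom E S A)) + ln (1 + (b - a) / (k%:R * a)) *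
     ((#|A| != 0)%:R * fine (P (atom E S A))) +
   ln_excess ((b - a) / (k%:R * a)) #|A| * fine (P (atom E S A)))).
  by apply: eq_bigr => A _; rewrite ln_mean_payoffE //; ring.
by rewrite !big_split /= -!mulr_sumr sum_atoms mulr1.
Qed.

End atoms.

Section atom_bounds.
Context {d : measure_display} {T : measurableType d} {R : realType} {P : probability T R}.
Context {m : nat} {E : 'I_m -> set T} {k : nat} {lambda p : R}.
Hypothesis mE : forall i, measurable (E i).
Hypothesis atom_prob_bounds : forall S A : {set 'I_m}, #|S| = k -> A \subset S ->
  (1 <= #|A| <= k)%N ->
  (((1 - lambda) * p ^+ #|A| * (1 - p) ^+ (k - #|A|))%:E <= P (atom E S A) /\
   P (atom E S A) <= ((1 + lambda) * p ^+ #|A| * (1 - p) ^+ (k - #|A|))%:E)%E.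
Implicit Types (S A : {set 'I_m}).

Lemma sum_atoms_bounds (f : nat -> R) S : f 0 = 0 -> (forall l, 0 <= f l) -> #|S| = k ->
  (1 - lambda) * \sum_(l < k.+1) binomial_pmf k p l * f l
    <= \sum_(A : {set 'I_m} | A \subset S) f #|A| * fine (P (atom E S A))
    <= (1 + lambda) * \sum_(l < k.+1) binomial_pmf k p l * f l.
Proof.
move=> f0 f_ge0 Sk.
have pmfE (s : R) : s * \sum_(l < k.+1) binomial_pmf k p l * f l =
    \sum_(A : {set 'I_m} | A \subset S) s * (p ^+ #|A| * (1 - p) ^+ (k - #|A|)) * f #|A|.
  rewrite (sum_subsets_by_card _ _ S (fun l => s * (p ^+ l * (1 - p) ^+ (k - l)) * f l)).
  rewrite Sk mulr_sumr; apply: eq_bigr => l _.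
  by rewrite /binomial_pmf mulrnAl mulrnAr mulrA.
have atom_bounds A : A \subset S -> #|A| != 0 ->
    (1 - lambda) * (p ^+ #|A| * (1 - p) ^+ (k - #|A|)) <= fine (P (atom E S A)) <=
    (1 + lambda) * (p ^+ #|A| * (1 - p) ^+ (k - #|A|)).
  move=> AS A0; have Ak : (1 <= #|A| <= k)%N by rewrite lt0n A0 -Sk subset_leq_card.
  have [lo hi] := atom_prob_bounds S A Sk AS Ak.
  rewrite -(fineK (fin_num_measure P _ (measurable_atom E mE S A))) !lee_fin in lo hi.
  by rewrite !mulrA lo hi.
rewrite !pmfE; apply/andP; split; apply: ler_sum => A AS.
all: have [->|A0] := eqVneq #|A| 0; first by rewrite f0 !mulr0 mul0r.
all: have /andP[lo hi] := atom_bounds A AS A0.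
  by rewrite mulrC ler_wpM2l.
by rewrite [_ * fine _]mulrC ler_wpM2r.
Qed.

Lemma Ufun_ge S : #|S| = k -> (1 - lambda) * (1 - (1 - p) ^+ k) <= fine (Ufun P E S).
Proof.
move=> Sk; rewrite (Ufun_atoms P E mE) -binomial_pmf_sum_neq0.
by case/andP: (sum_atoms_bounds (fun l => (l != 0)%:R) S erefl (fun l => ler0n R _) Sk).
Qed.

Lemma Ufun_gap_le (a b : R) S1 S2 : (0 < k)%N -> 0 < a -> a <= b ->
  #|S1| = k -> #|S2| = k -> (Vfun P k E a b S1 <= Vfun P k E a b S2)%E ->
  ln (1 + (b - a) / (k%:R * a)) * (fine (Ufun P E S1) - fine (Ufun P E S2)) <=
  2 * lambda * \sum_(l < k.+1) binomial_pmf k p l * ln_excess ((b - a) / (k%:R * a)) l.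
Proof.
move=> k0 a0 ab S1k S2k; rewrite !Vfun_decomp // lee_fin.
set c := (b - a) / (k%:R * a) => V12.
have c0 : 0 <= c by apply: divr_ge0; [lra | rewrite mulr_ge0 ?ler0n //; lra].
have bounds S := sum_atoms_bounds (ln_excess c) S (ln_excess0 c) (fun l => ln_excess_ge0 c l c0).
have /andP[G1 _] := bounds S1 S1k; have /andP[_ G2] := bounds S2 S2k.
rewrite mulrBr; lra.
Qed.

End atom_bounds.

Theorem theorem5 (d : measure_display) (T : measurableType d) (R : realType)
  (P : probability T R) (m k : nat) (E : 'I_m -> set T) (a b lambda p : R)
  (SW SL : {set 'I_m}) :
  (forall i, measurable (E i)) ->
  (1 <= k <= m)%N ->
  0 < a -> a < b ->
  0 <= lambda -> lambda < 1 ->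
  0 < p -> p <= (k%:R)^-1 ->
  (forall S A : {set 'I_m}, #|S| = k -> A \subset S -> (1 <= #|A| <= k)%N ->
     ((1 - lambda) * p ^+ #|A| * (1 - p) ^+ (k - #|A|))%:E <= P (atom E S A) /\
     P (atom E S A) <= ((1 + lambda) * p ^+ #|A| * (1 - p) ^+ (k - #|A|))%:E)%E ->
  #|SW| = k -> (forall S : {set 'I_m}, #|S| = k -> (Ufun P E S <= Ufun P E SW)%E) ->
  #|SL| = k -> (forall S : {set 'I_m}, #|S| = k -> (Vfun P k E a b S <= Vfun P k E a b SL)%E) ->
  (fine (Ufun P E SW) - fine (Ufun P E SL)) / fine (Ufun P E SW) <=
  (2 * zeta3 R * lambda * k%:R * p * (1 - p)) /
  (ln (1 + (b - a) / (k%:R * a)) * (1 - lambda) * (1 - (1 - p) ^+ k)).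
Proof.
move=> mE /andP[k_gt0 _] a0 ab l0 l1 p0 pk atom_bounds SWk _ SLk SL_opt.
have k0 : (0 : R) < k%:R by rewrite ltr0n.
have kp1 : k%:R * p <= 1 by rewrite -(ler_pdivlMl _ _ k0) mulr1.
have p01 : 0 <= p <= 1 by rewrite ltW //= (le_trans pk) // invf_le1 // ler1n.
have gap := Ufun_gap_le mE atom_bounds _ _ _ _ k_gt0 a0 (ltW ab) SWk SLk (SL_opt SW SWk).
set c := (b - a) / (k%:R * a) in gap *.
have c0 : 0 < c by rewrite divr_gt0 ?subr_gt0 ?mulr_gt0.
have Q_le := binomial_pmf_ln_excess_le c k p (ltW c0) p01 kp1.
set Q := \sum_(l < k.+1) _ in gap Q_le.
have q0 : 0 < 1 - (1 - p) ^+ k by rewrite subr_gt0 exprn_ilt1 -?lt0n //; lra.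
have K0 : 0 <= k%:R * p * (1 - p) by rewrite !mulr_ge0 ?ler0n //; lra.
have -> : 2 * zeta3 R * lambda * k%:R * p * (1 - p) =
  (2 * zeta3 R) * (lambda * (k%:R * p * (1 - p))) by ring.
have z1 := zeta3_ge1 R.
rewrite -[ln _ * _ * _]mulrA; apply: relative_gap_le.
- by apply: ln_gt0; lra.
- by rewrite mulr_gt0 // subr_gt0.
- exact: Ufun_ge mE atom_bounds SW SWk.
- by rewrite !mulr_ge0 //; lra.
- apply: le_trans gap (le_trans _ (ler_peMl _ _)).
  + rewrite [2 * _]mulrC -[_ * 2 * Q]mulrA; apply: ler_wpM2l => //; lra.
  + by rewrite mulr_ge0.
  + lra.
Qed.
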